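(* Assume $\mathrm{recc}(C)\subseteq\mathrm{recc}(P^B)$. For every $k\in N_2$, $$S_k^C=\{\bar x\}+\mathrm{conv}\Big(\bigcup_{j\in N_1\cup N_2}\{\lambda\bar r^j:\alpha_j<\lambda<\beta_j\}\Big)+\{\lambda\bar r^k:\lambda\le0\}+\mathrm{recc}(C).$$
   Context: Let $A\in\mathbb{R}^{m\times n}$ have full row rank, $b\in\mathbb{R}^m$, and $P=\{x\in\mathbb{R}^n_+:Ax=b\}$. Let $C\subseteq\mathbb{R}^n$ be an open convex set. Fix a basis $B$ of $P$ with nonbasic set $N=\{1,\dots,n\}\setminus B$. Write $P=\{x:x_i=\bar b_i-\sum_{j\in N}\bar a_{ij}x_j\ (i\in B),\ x\ge0\}$ with $\bar b\ge0$. The basic solution $\bar x$ has $\bar x_i=\bar b_i$ ($i\in B$) and $0$ ($i\in N$). $P^B$ is obtained by dropping $x_i\ge0$ for $i\in B$. For $j\in N$, $\bar r^j$ has $\bar r^j_k=-\bar a_{kj}$ ($k\in B$), $\bar r^j_j=1$, and $0$ otherwise. Thus $P^B=\{\bar x+\sum_{j\in N}x_j\bar r^j:x_j\ge0\}$. It is assumed that $\bar x\notin\mathrm{cl}(C)$. For $j\in N$, $\alpha_j=\inf\{\lambda\ge0:\bar x+\lambda\bar r^j\in C\}$ and $\beta_j=\sup\{\lambda\ge0:\bar x+\lambda\bar r^j\in C\}$, with $\alpha_j=+\infty$, $\beta_j=-\infty$ if the halfline misses $C$. Define - $N_1=\{j:\alpha_j\in(0,\infty),\beta_j=+\infty\}$;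 - $N_2=\{j:\alpha_j\in(0,\infty),\beta_j\in(\alpha_j,\infty)\}$. For a set $K$, $\mathrm{recc}(K)=\{d:x+\lambda d\in K\ \forall x\in K,\lambda\ge0\}$. For $k\in N_2$, $S_k^C=\{\bar x\}+\mathrm{conv}\big(\bigcup_{j\in N_2}\{\lambda\bar r^j:0\le\lambda<\beta_j\}\big)+\{\lambda\bar r^k:\lambda\le0\}+\mathrm{recc}(C)$. *)

From HB Require Import structures.
From mathcomp Require Import all_boot all_order all_algebra.
From mathcomp Require Import boolp classical_sets reals constructive_ereal ereal.
Set Implicit Arguments. Unset Strict Implicit. Unset Printing Implicit Defensive.
Import Order.TTheory GRing.Theory Num.Theory.
Local Open Scope classical_set_scope.
Local Open Scope ring_scope.

(* Vectors of R^n are column vectors 'cV[R]_n; coordinate i of x is x i 0. *)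
Section Defs.
Variables (R : realType) (n : nat).
Notation vec := 'cV[R]_n.

Definition msum (X Y : set vec) : set vec :=
  [set z | exists x y, X x /\ Y y /\ z = x + y].

Definition conv (S : set vec) : set vec :=
  [set z | exists (k : nat) (w : 'I_k -> R) (p : 'I_k -> vec),
     (forall i, 0 <= w i) /\ \sum_(i < k) w i = 1 /\ (forall i, S (p i)) /\
     z = \sum_(i < k) w i *: p i].

Definition convex_set (K : set vec) : Prop :=
  forall x y t, K x -> K y -> 0 <= t <= 1 -> K ((1 - t) *: x + t *: y).

(* openness in the usual topology of R^n (sup-norm balls) *)
Definition open_set (K : set vec) : Prop :=
  forall x, K x -> exists2 e : R, 0 < e &
    forall y : vec, (forall i, `|y i 0 - x i 0| < e) -> K y.

Definition in_closure (K : set vec) (x : vec) : Prop :=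
  forall e : R, 0 < e -> exists2 y : vec, K y & forall i, `|y i 0 - x i 0| < e.

Definition recc (K : set vec) : set vec :=
  [set d | forall x (l : R), K x -> 0 <= l -> K (x + l *: d)].

End Defs.

(* B is a basis of A : m column indices whose columns are linearly independent *)
Definition is_basis (R : realType) (m n : nat) (A : 'M[R]_(m, n)) (B : {set 'I_n}) :=
  #|B| = m /\
  forall y : 'cV[R]_n, (forall j, j \notin B -> y j 0 = 0) -> A *m y = 0 -> y = 0.

(* P^B : P with the nonnegativity constraints of the basic variables dropped *)
Definition PB (R : realType) (m n : nat) (A : 'M[R]_(m, n)) (b : 'cV[R]_m)
  (B : {set 'I_n}) : set 'cV[R]_n :=
  [set x | A *m x = b /\ forall j, j \notin B -> 0 <= x j 0].

Definition alpha (R : realType) (n : nat) (C : set 'cV[R]_n) (xbar r : 'cV[R]_n)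
  : \bar R :=
  ereal_inf [set (l%:E) | l in [set l : R | 0 <= l /\ C (xbar + l *: r)]].

Definition beta (R : realType) (n : nat) (C : set 'cV[R]_n) (xbar r : 'cV[R]_n)
  : \bar R :=
  ereal_sup [set (l%:E) | l in [set l : R | 0 <= l /\ C (xbar + l *: r)]].

(* N1 and N2 (membership for a nonbasic index j, with ray r = rbar^j) *)
Definition inN1 (R : realType) (n : nat) (C : set 'cV[R]_n) (xbar r : 'cV[R]_n) :=
  (0 < alpha C xbar r < +oo)%E /\ beta C xbar r = +oo%E.

Definition inN2 (R : realType) (n : nat) (C : set 'cV[R]_n) (xbar r : 'cV[R]_n) :=
  (0 < alpha C xbar r < +oo)%E /\ (alpha C xbar r < beta C xbar r < +oo)%E.

From HB Require Import structures.
From mathcomp Require Import all_boot all_order all_algebra.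
From mathcomp Require Import boolp classical_sets reals constructive_ereal ereal.
From mathcomp Require Import lra ring.
Set Implicit Arguments. Unset Strict Implicit. Unset Printing Implicit Defensive.
Import Order.TTheory GRing.Theory Num.Theory.
Local Open Scope classical_set_scope.
Local Open Scope ring_scope.

(* Both inclusions come from one principle: if every generator of a hull lies
   in [conv S + D] with [D] convex, then so does the whole hull, because
   [conv S + D] is convex.  For the inclusion from left to right, a generator
   [l r^j] with [0 <= l <= alpha_j] is [l / rho] times [rho r^j] with
   [alpha_j < rho < beta_j]; the remaining weight [1 - l / rho] is put on a
   point [rho_k r^k] and removed again by the ray [{l r^k : l <= 0}].  For the
   inclusion from right to left, an index [j] in [N1] has [beta_j = +oo], so
   for open convex [C] the direction [r^j] is a recession direction of [C] and
   the generator [l r^j] is absorbed by [recc C]. *)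

Section ConvexHull.
Variables (R : realType) (n : nat).
Notation vec := 'cV[R]_n.
Implicit Types (S T D K X Y : set vec).

Lemma sub_conv S : S `<=` conv S.
Proof.
move=> p Sp; exists 1%N, (fun=> 1), (fun=> p).
by rewrite !big_ord1 scale1r; do !split => //; exact: ler01.
Qed.

Lemma conv_convex S : convex_set (conv S).
Proof.
move=> ? ? t [k1 [w1 [p1 [w1_ge0 [w1_sum [Sp1 ->]]]]]].
move=> [k2 [w2 [p2 [w2_ge0 [w2_sum [Sp2 ->]]]]]] /andP[t_ge0 t_le1].
have splitl i : split (lshift k2 i) = inl i := unsplitK (inl i).
have splitr i : split (rshift k1 i) = inr i := unsplitK (inr i).
pose w i := match split i with
  | inl a => (1 - t) * w1 a | inr a => t * w2 a end.
pose p i := match split i with inl a => p1 a | inr a => p2 a end.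
exists (k1 + k2)%N, w, p; split.
  by move=> i; rewrite /w; case: split => a; apply: mulr_ge0 => //; lra.
split.
  rewrite big_split_ord /w /=.
  under eq_bigr do rewrite splitl.
  under [X in _ + X]eq_bigr do rewrite splitr.
  by rewrite -!mulr_sumr w1_sum w2_sum !mulr1 subrK.
split; first by move=> i; rewrite /p; case: split.
rewrite big_split_ord /w /p /= !scaler_sumr.
under [in RHS]eq_bigr do rewrite splitl -scalerA.
by under [X in _ = _ + X]eq_bigr do rewrite splitr -scalerA.
Qed.

Lemma conv_sub_convex S K : convex_set K -> S `<=` K -> conv S `<=` K.
Proof.
move=> cK SK ? [k [w [p [w_ge0 [w_sum [Sp ->]]]]]].
elim: k w p w_ge0 w_sum Sp => [|k IH] w p w_ge0 w_sum Sp.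
  by move: w_sum; rewrite big_ord0 => /eqP; rewrite eq_sym oner_eq0.
move: w_sum; rewrite !big_ord_recr /=.
set t := w ord_max => w_sum.
have lw_ge0 : 0 <= \sum_(i < k) w (widen_ord (leqnSn k) i).
  by apply: sumr_ge0 => i _.
have [t1|t_lt1] := eqVneq t 1.
  have lw0 : \sum_(i < k) w (widen_ord (leqnSn k) i) = 0 by lra.
  rewrite big1 ?add0r ?t1 ?scale1r; first exact: SK.
  by move=> i _; rewrite (psumr_eq0P _ lw0) ?scale0r.
have t_ge0 : 0 <= t := w_ge0 ord_max.
have t_le1 : t <= 1 by lra.
have s_gt0 : 0 < 1 - t by rewrite subr_gt0 lt_neqAle t_lt1.
pose w' i := w (widen_ord (leqnSn k) i) / (1 - t).
have -> : \sum_(i < k) w (widen_ord (leqnSn k) i) *: p (widen_ord (leqnSn k) i)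
    = (1 - t) *: \sum_(i < k) w' i *: p (widen_ord (leqnSn k) i).
  rewrite scaler_sumr; apply: eq_bigr => i _.
  by rewrite scalerA /w' mulrC divfK ?gt_eqF.
apply: cK; [|exact: SK|lra].
apply: IH => [i||i]; last exact: Sp.
- by apply: divr_ge0 => //; exact: ltW.
- by rewrite -mulr_suml (_ : \sum_(i < k) _ = 1 - t) ?divff ?gt_eqF //; lra.
Qed.

Lemma convex_msum X Y : convex_set X -> convex_set Y -> convex_set (msum X Y).
Proof.
move=> cX cY _ _ t [x1 [y1 [Xx1 [Yy1 ->]]]] [x2 [y2 [Xx2 [Yy2 ->]]]] t01.
exists ((1 - t) *: x1 + t *: x2), ((1 - t) *: y1 + t *: y2).
split; [exact: cX | split; [exact: cY|]].
by rewrite !scalerDr addrACA.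
Qed.

Lemma conv_sub_msum S T D : convex_set D ->
  T `<=` msum (conv S) D -> conv T `<=` msum (conv S) D.
Proof. by move=> cD; apply: conv_sub_convex; apply: convex_msum => //; exact: conv_convex. Qed.

Lemma msum_conv_l S D p : S p -> D 0 -> msum (conv S) D p.
Proof. by move=> Sp D0; exists p, 0; rewrite addr0; split => //; exact: sub_conv. Qed.

Lemma msum_conv_r S D p : S 0 -> D p -> msum (conv S) D p.
Proof. by move=> S0 Dp; exists 0, p; rewrite add0r; split => //; exact: sub_conv. Qed.

Lemma scale_msum_conv S D u q s : S u -> S q -> 0 <= s <= 1 ->
  D ((s - 1) *: u) -> msum (conv S) D (s *: q).
Proof.
move=> Su Sq s01 Du; exists ((1 - s) *: u + s *: q), ((s - 1) *: u).
split; first by apply: conv_convex => //; exact: sub_conv.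
split => //; rewrite addrAC -scalerDl.
by rewrite (_ : 1 - s + (s - 1) = 0) ?scale0r ?add0r //; ring.
Qed.

End ConvexHull.

Section MinkowskiSum.
Variables (R : realType) (n : nat).
Notation vec := 'cV[R]_n.
Implicit Types (X Y K D : set vec).

Lemma msum3P X K D x z :
  msum (msum (msum [set x] X) K) D z <->
  exists c v d, [/\ X c, K v, D d & z = x + c + v + d].
Proof.
split=> [[_ [d [[_ [v [[_ [c [-> [Xc ->]]]] [Kv ->]]]] [Dd ->]]]]|].
  by exists c, v, d.
move=> [c [v [d [Xc Kv Dd ->]]]].
by exists (x + c + v), d; do !split => //; exists (x + c), v; do !split => //; exists x, c.
Qed.

Lemma msum3_absorb_mid X Y K D x :
  (forall u v, K u -> K v -> K (u + v)) -> X `<=` msum Y K ->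
  msum (msum (msum [set x] X) K) D `<=` msum (msum (msum [set x] Y) K) D.
Proof.
move=> addK XY z /msum3P[_ [v [d [/XY[c [u [Yc [Ku ->]]]] Kv Dd ->]]]].
apply/msum3P; exists c, (u + v), d; split => //; first exact: addK.
by rewrite !addrA.
Qed.

Lemma msum3_absorb_last X Y K D x :
  (forall u v, D u -> D v -> D (u + v)) -> X `<=` msum Y D ->
  msum (msum (msum [set x] X) K) D `<=` msum (msum (msum [set x] Y) K) D.
Proof.
move=> addD XY z /msum3P[_ [v [d [/XY[c [u [Yc [Du ->]]]] Kv Dd ->]]]].
apply/msum3P; exists c, v, (u + d); split => //; first exact: addD.
by rewrite !addrA (addrAC (x + c) u).
Qed.

End MinkowskiSum.

Section Recession.
Variables (R : realType) (n : nat).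
Notation vec := 'cV[R]_n.
Variable C : set vec.

Lemma recc0 : recc C 0.
Proof. by move=> x l Cx _; rewrite scaler0 addr0. Qed.

Lemma reccD u v : recc C u -> recc C v -> recc C (u + v).
Proof. by move=> Cu Cv x l Cx l_ge0; rewrite scalerDr addrA; apply: Cv => //; exact: Cu. Qed.

Lemma reccZ a u : 0 <= a -> recc C u -> recc C (a *: u).
Proof. by move=> a_ge0 Cu x l Cx l_ge0; rewrite scalerA; apply: Cu => //; exact: mulr_ge0. Qed.

Lemma recc_convex : convex_set (recc C).
Proof.
move=> u v t Cu Cv /andP[t_ge0 t_le1].
by apply: reccD; apply: reccZ => //; lra.
Qed.

Lemma open_set_extend x y : open_set C -> C y ->
  exists2 s0 : R, 0 < s0 & forall s, 0 <= s <= s0 -> C (y + s *: (y - x)).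
Proof.
move=> oC Cy; have [e e_gt0 ball_e] := oC y Cy.
pose M := \sum_i `|y i 0 - x i 0|.
have M_ge0 : 0 <= M by apply: sumr_ge0.
have le_M i : `|y i 0 - x i 0| <= M by rewrite /M (bigD1 i) //= lerDl sumr_ge0.
exists (e / (M + 1)); first by apply: divr_gt0; lra.
move=> s /andP[s_ge0 s_le]; apply: ball_e => i.
rewrite !mxE addrAC subrr add0r normrM ger0_norm //.
have sM1 : s * (M + 1) <= e by rewrite -ler_pdivlMr //; lra.
have : s * `|y i 0 - x i 0| <= s * M by exact: ler_wpM2l.
nra.
Qed.

Lemma beta_pinfty_ray x r : beta C x r = +oo%E ->
  forall L : R, exists2 l, L <= l & C (x + l *: r).
Proof.
move=> beta_oo L; apply: contrapT => no_l.
suff : (beta C x r <= L%:E)%E by rewrite beta_oo.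
apply: ge_ereal_sup => _ [l [_ Cl] <-]; rewrite lee_fin leNgt.
by apply/negP => L_lt_l; apply: no_l; exists l => //; exact: ltW.
Qed.

(* Write [y + l r] as a convex combination of [x + L r] (far out on the ray)
   and a point of [C] slightly beyond [y] on the line through [x]. *)
Lemma beta_pinfty_recc x r : open_set C -> convex_set C ->
  beta C x r = +oo%E -> recc C r.
Proof.
move=> oC cC beta_oo y l Cy; rewrite le_eqVlt => /predU1P[<-|l_gt0].
  by rewrite scale0r addr0.
have [s0 s0_gt0 C_ext] := open_set_extend x oC Cy.
have [L L_big CL] := beta_pinfty_ray beta_oo (l + l / s0).
have lsL : l / s0 <= L - l by lra.
have Ll_gt0 : 0 < L - l by apply: lt_le_trans lsL; exact: divr_gt0.
have L_gt0 : 0 < L by lra.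
pose s := l / (L - l).
have Cy' : C (y + s *: (y - x)).
  apply: C_ext; apply/andP; split; first by apply: divr_ge0 => //; lra.
  by rewrite /s ler_pdivrMr // mulrC -ler_pdivrMr.
have t01 : 0 <= l / L <= 1.
  by apply/andP; split; [apply: divr_ge0; lra | rewrite ler_pdivrMr // mul1r; lra].
have := cC _ _ _ Cy' CL t01.
congr C; apply/matrixP => i j; rewrite !mxE /s.
by field; rewrite !gt_eqF.
Qed.

End Recession.

Section Rays.
Variables (R : realType) (n : nat).
Notation vec := 'cV[R]_n.
Implicit Types (C S D : set vec) (x r u : vec).

Lemma nonpos_rayD r u v :
  let ray := [set v | exists l : R, l <= 0 /\ v = l *: r] in
  ray u -> ray v -> ray (u + v).
Proof.
move=> ray [l1 [l1_le0 ->]] [l2 [l2_le0 ->]].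
by exists (l1 + l2); rewrite scalerDl; split => //; lra.
Qed.

Lemma convex_nonpos_ray r :
  convex_set [set v | exists l : R, l <= 0 /\ v = l *: r].
Proof.
move=> _ _ t [l1 [l1_le0 ->]] [l2 [l2_le0 ->]] /andP[t_ge0 t_le1].
exists ((1 - t) * l1 + t * l2); split; first nra.
by rewrite !scalerA -scalerDl.
Qed.

Lemma inN2_fin C x r : inN2 C x r ->
  exists a b : R, [/\ alpha C x r = a%:E, beta C x r = b%:E, 0 < a & a < b].
Proof.
case=> /andP[+ +] /andP[+ +].
by case: (alpha C x r) => [a| |] //; case: (beta C x r) => [b| |] // *; exists a, b.
Qed.

Lemma inN1_scale_recc C x r l : open_set C -> convex_set C -> inN1 C x r ->
  (alpha C x r < l%:E)%E -> recc C (l *: r).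
Proof.
move=> oC cC [/andP[alpha_gt0 _] beta_oo] alpha_lt_l.
apply: reccZ; last exact: beta_pinfty_recc oC cC beta_oo.
by apply: ltW; rewrite -lte_fin; exact: lt_trans alpha_lt_l.
Qed.

(* For [l <= alpha], [l r] is a fraction of [rho r] with [rho] in
   [(alpha, beta)]; the missing weight is put on [u] and taken back in [D]. *)
Lemma inN2_scale_msum C S D x r u : inN2 C x r -> S u ->
  (forall l, (alpha C x r < l%:E)%E -> (l%:E < beta C x r)%E -> S (l *: r)) ->
  (forall s, 0 <= s <= 1 -> D ((s - 1) *: u)) -> D 0 ->
  forall l, 0 <= l -> (l%:E < beta C x r)%E -> msum (conv S) D (l *: r).
Proof.
move=> /inN2_fin[a [b [-> -> a_gt0 a_lt_b]]] Su S_seg D_u D0 l l_ge0.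
rewrite lte_fin => l_lt_b; have [a_lt_l|l_le_a] := ltP a l.
  by apply: msum_conv_l D0; apply: S_seg; rewrite lte_fin.
pose rho := (a + b) / 2.
have rho_gt0 : 0 < rho by rewrite /rho; lra.
have s01 : 0 <= l / rho <= 1.
  apply/andP; split; first exact: divr_ge0 l_ge0 (ltW rho_gt0).
  by rewrite ler_pdivrMr // mul1r /rho; lra.
rewrite -[l](divfK (lt0r_neq0 rho_gt0)) -scalerA.
apply: scale_msum_conv Su _ s01 (D_u _ s01).
by apply: S_seg; rewrite lte_fin /rho; lra.
Qed.

End Rays.

Theorem proposition5 (R : realType) (m n : nat) (A : 'M[R]_(m, n)) (b : 'cV[R]_m)
  (C : set 'cV[R]_n) (B : {set 'I_n}) (xbar : 'cV[R]_n) (rbar : 'I_n -> 'cV[R]_n) :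
  \rank A = m ->
  is_basis A B ->
  (* xbar is the basic solution of B, and it is feasible (bbar >= 0) *)
  A *m xbar = b -> (forall j, j \notin B -> xbar j 0 = 0) ->
  (forall i, 0 <= xbar i 0) ->
  (* rbar j (j nonbasic) is the extreme ray of P^B in direction x_j *)
  (forall j, j \notin B ->
     A *m rbar j = 0 /\ rbar j j 0 = 1 /\
     forall k, k \notin B -> k != j -> rbar j k 0 = 0) ->
  open_set C -> convex_set C -> ~ in_closure C xbar ->
  recc C `<=` recc (PB A b B) ->
  forall k, k \notin B -> inN2 C xbar (rbar k) ->
    msum (msum (msum [set xbar]
      (conv [set v | exists j, j \notin B /\ inN2 C xbar (rbar j) /\
               exists l : R, 0 <= l /\ (l%:E < beta C xbar (rbar j))%E /\
                 v = l *: rbar j]))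
      [set v | exists l : R, l <= 0 /\ v = l *: rbar k])
      (recc C)
    =
    msum (msum (msum [set xbar]
      (conv [set v | exists j, j \notin B /\
               (inN1 C xbar (rbar j) \/ inN2 C xbar (rbar j)) /\
               exists l : R, (alpha C xbar (rbar j) < l%:E)%E /\
                 (l%:E < beta C xbar (rbar j))%E /\ v = l *: rbar j]))
      [set v | exists l : R, l <= 0 /\ v = l *: rbar k])
      (recc C).
Proof.
move=> _ _ _ _ _ _ oC cC _ _ k kB Nk.
have [ak [bk [eak ebk ak_gt0 ak_lt_bk]]] := inN2_fin Nk.
apply/seteqP; split.
- apply: msum3_absorb_mid; first exact: nonpos_rayD.
  apply: conv_sub_msum; first exact: convex_nonpos_ray.
  pose rho := (ak + bk) / 2.
  move=> _ [j [jB [Nj [l [l_ge0 [l_lt_beta ->]]]]]].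
  apply: (inN2_scale_msum (u := rho *: rbar k) Nj) => //.
  + exists k; split=> //; split; first by right.
    by exists rho; rewrite eak ebk !lte_fin /rho; do !split => //; lra.
  + by move=> l' ? ?; exists j; split=> //; split; [right | exists l'].
  + move=> s /andP[? ?]; exists ((s - 1) * rho).
    by rewrite scalerA; split=> //; rewrite /rho; nra.
  + by exists 0; rewrite scale0r.
- apply: msum3_absorb_last; first exact: reccD.
  apply: conv_sub_msum; first exact: recc_convex.
  move=> _ [j [jB [[Nj|Nj] [l [alpha_lt_l [l_lt_beta ->]]]]]].
  + apply: msum_conv_r; last exact: inN1_scale_recc oC cC Nj alpha_lt_l.
    exists k; split=> //; split=> //; exists 0.
    by rewrite scale0r ebk lte_fin; do !split => //; lra.
  + apply: msum_conv_l; last exact: recc0.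
    have [a [? [ea _ a_gt0 _]]] := inN2_fin Nj.
    exists j; split=> //; split=> //; exists l; split=> //.
    by move: alpha_lt_l; rewrite ea lte_fin; lra.
Qed.
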